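(* Let $G$ be a finite group and $H\subset G$ a subgroup. Let $\xi$ be a pure state of a system carrying a projective unitary representation $U$ of $G$, which is a uniform state with symmetry $H$, i.e. $\chi_\xi(g)=1$ for $g\in H$ and $\chi_\xi(g)=0$ for $g\notin H$. Let $|\phi\rangle$ be any pure state of a system carrying a projective unitary representation $U'$ of $G$ with $H\subset\mathrm{Sym}_G(\phi)$. Then for every positive integer $M$ there exists a CPTP map $\Lambda$, covariant w.r.t. $U$ and $U'^{\otimes M}$, with $\Lambda(\xi)=\phi^{\otimes M}$.
   Context: $\chi_\xi(g)=\langle\xi|U(g)|\xi\rangle$; $\mathrm{Sym}_G(\phi)=\{g: U'(g)\phi U'(g)^\dagger=\phi\}$ with $\phi=|\phi\rangle\langle\phi|$. A projective unitary representation satisfies $U(g)U(g')=e^{i\omega(g,g')}U(gg')$. A CPTP map $\Lambda$ is covariant w.r.t. input representation $U$ and output representation $V$ if $V(g)\Lambda(X)V(g)^\dagger=\Lambda(U(g)XU(g)^\dagger)$ for all $g\in G$. *)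

(* Hilbert spaces are C^d with C an arbitrary numClosedFieldType
   (e.g. algC or R[i] for a real closed field R). *)
From HB Require Import structures.
From mathcomp Require Import all_boot all_order all_algebra all_fingroup.
From mathcomp Require Import mxtens.
Set Implicit Arguments. Unset Strict Implicit. Unset Printing Implicit Defensive.
Import Order.TTheory GRing.Theory Num.Theory.
Local Open Scope ring_scope.

Section QDefs.
Variable C : numClosedFieldType.

Definition adj {m n} (A : 'M[C]_(m, n)) : 'M[C]_(n, m) := (map_mx Num.conj A)^T.

(* pure states: unit vectors, and their density matrices |x><x| *)
Definition unit_vec {d} (x : 'cV[C]_d) : Prop := adj x *m x = 1.
Definition proj {d} (x : 'cV[C]_d) : 'M[C]_d := x *m adj x.

Definition unitary {d} (A : 'M[C]_d) : Prop := adj A *m A = 1%:M /\ A *m adj A = 1%:M.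

Definition proj_unitary_rep {gT : finGroupType} (G : {group gT}) {d}
    (U : gT -> 'M[C]_d) : Prop :=
  (forall g, g \in G -> unitary (U g)) /\
  (forall g g', g \in G -> g' \in G ->
     exists c : C, `|c| = 1 /\ U g *m U g' = c *: U (g * g')%g).

Definition chi {gT : finGroupType} {d} (U : gT -> 'M[C]_d) (xi : 'cV[C]_d) (g : gT) : C :=
  (adj xi *m U g *m xi) 0 0.

Definition SymG {gT : finGroupType} (G : {group gT}) {d} (U : gT -> 'M[C]_d)
    (phi : 'cV[C]_d) : {set gT} :=
  [set g in G | U g *m proj phi *m adj (U g) == proj phi].

Fixpoint pdim (d M : nat) : nat := if M is M'.+1 then (d * pdim d M')%N else 1%N.
Fixpoint tenspow {m n} (M : nat) (A : 'M[C]_(m, n)) : 'M[C]_(pdim m M, pdim n M) :=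
  if M is M'.+1 then A *t tenspow M' A else 1%:M.

(* positive semidefiniteness of a block matrix on C^k (x) C^m given by its
   k x k blocks B i j (each m x m): <v|B|v> >= 0 for every vector v *)
Definition psd_blocks {k m} (B : 'I_k -> 'I_k -> 'M[C]_m) : Prop :=
  forall v : 'I_k -> 'cV[C]_m,
    0 <= \sum_(i < k) \sum_(j < k) (adj (v i) *m B i j *m v j) 0 0.

Definition linear_map {m n} (L : 'M[C]_m -> 'M[C]_n) : Prop :=
  forall (a : C) (X Y : 'M[C]_m), L (a *: X + Y) = a *: L X + L Y.

(* complete positivity: id_k (x) L is positive for every ancilla dimension k *)
Definition completely_positive {m n} (L : 'M[C]_m -> 'M[C]_n) : Prop :=
  forall (k : nat) (B : 'I_k -> 'I_k -> 'M[C]_m),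
    psd_blocks B -> psd_blocks (fun i j => L (B i j)).

Definition trace_preserving {m n} (L : 'M[C]_m -> 'M[C]_n) : Prop :=
  forall X, \tr (L X) = \tr X.

Definition CPTP {m n} (L : 'M[C]_m -> 'M[C]_n) : Prop :=
  [/\ linear_map L, completely_positive L & trace_preserving L].

Definition covariant {gT : finGroupType} (G : {group gT}) {m n}
    (U : gT -> 'M[C]_m) (V : gT -> 'M[C]_n) (L : 'M[C]_m -> 'M[C]_n) : Prop :=
  forall g, g \in G -> forall X,
    V g *m L X *m adj (V g) = L (U g *m X *m adj (U g)).

End QDefs.

From HB Require Import structures.
From mathcomp Require Import all_boot all_order all_algebra all_fingroup.
From mathcomp Require Import mxtens.
Import Order.TTheory GRing.Theory Num.Theory.
Local Open Scope ring_scope.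
Set Implicit Arguments. Unset Strict Implicit. Unset Printing Implicit Defensive.

(* Since [chi U xi] is the indicator of [H], the orbit vectors [U g xi] agree up to
   a phase along each left coset [g H] and are orthogonal across cosets, so
   [P = |H|^-1 sum_g |U g xi><U g xi|] is an orthogonal projection.  Measure the
   input along this family and, on outcome [g], prepare [U'(g)^(x)M phi^(x)M]; on
   the complement [1 - P] prepare the maximally mixed state.  Such a
   measure-and-prepare map is CPTP; it is covariant because [G] permutes the
   outcomes together with the prepared states; and on [xi] only outcomes in [H]
   occur, each preparing [phi^(x)M] because [H] stabilizes [phi]. *)

Section MatrixFacts.
Variable C : numClosedFieldType.

Lemma adjE m n (A : 'M[C]_(m, n)) i j : adj A i j = (A j i)^*.
Proof. by rewrite !mxE. Qed.

Lemma adjK m n (A : 'M[C]_(m, n)) : adj (adj A) = A.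
Proof. by apply/matrixP=> i j; rewrite !adjE conjCK. Qed.

Lemma adjB m n (A B : 'M[C]_(m, n)) : adj (A - B) = adj A - adj B.
Proof. by rewrite /adj map_mxB linearB. Qed.

Lemma adjZ m n c (A : 'M[C]_(m, n)) : adj (c *: A) = c^* *: adj A.
Proof. by rewrite /adj map_mxZ linearZ. Qed.

Lemma adj1 n : adj (1%:M : 'M[C]_n) = 1%:M.
Proof. by rewrite /adj map_mx1 trmx1. Qed.

Lemma adjM m n p (A : 'M[C]_(m, n)) (B : 'M[C]_(n, p)) :
  adj (A *m B) = adj B *m adj A.
Proof. by rewrite /adj map_mxM trmx_mul. Qed.

Lemma adj_sum (I : finType) (P : pred I) m n (F : I -> 'M[C]_(m, n)) :
  adj (\sum_(i | P i) F i) = \sum_(i | P i) adj (F i).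
Proof. by rewrite /adj raddf_sum linear_sum. Qed.

Lemma adj_tens m n p q (A : 'M[C]_(m, n)) (B : 'M[C]_(p, q)) :
  adj (A *t B) = adj A *t adj B.
Proof. by rewrite /adj map_mxT trmx_tens. Qed.

Lemma tensmx11 m n : (1%:M : 'M[C]_m) *t (1%:M : 'M[C]_n) = 1%:M.
Proof.
apply/matrixP=> i j.
case: (mxtens_indexP i)=> i0 i1; case: (mxtens_indexP j)=> j0 j1.
rewrite tensmxE !mxE (can_eq (@mxtens_indexK m n)) xpair_eqE.
by case: (i0 == j0); case: (i1 == j1); rewrite ?mulr1 ?mulr0.
Qed.

Lemma tensmxZl m n p q c (A : 'M[C]_(m, n)) (B : 'M[C]_(p, q)) :
  (c *: A) *t B = c *: (A *t B).
Proof. by apply/matrixP=> i j; rewrite !mxE mulrA. Qed.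

Lemma tensmxZr m n p q c (A : 'M[C]_(m, n)) (B : 'M[C]_(p, q)) :
  A *t (c *: B) = c *: (A *t B).
Proof. by apply/matrixP=> i j; rewrite !mxE mulrCA. Qed.

Lemma mxtrace_tens m n (A : 'M[C]_m) (B : 'M[C]_n) : \tr (A *t B) = \tr A * \tr B.
Proof. by rewrite /mxtrace mulr_sum; apply: eq_bigr => k _; rewrite mxE. Qed.

Lemma tenspowM M m n p (A : 'M[C]_(m, n)) (B : 'M[C]_(n, p)) :
  tenspow M (A *m B) = tenspow M A *m tenspow M B.
Proof. by elim: M => [|M IH] /=; rewrite ?mul1mx // IH tensmx_mul. Qed.

Lemma tenspowZ M m n c (A : 'M[C]_(m, n)) :
  tenspow M (c *: A) = c ^+ M *: tenspow M A.
Proof.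
elim: M => [|M IH] /=; first by rewrite scale1r.
by rewrite IH tensmxZl tensmxZr scalerA exprS.
Qed.

Lemma tenspow1 M n : tenspow M (1%:M : 'M[C]_n) = 1%:M.
Proof. by elim: M => [|M IH] //=; rewrite IH tensmx11. Qed.

Lemma adj_tenspow M m n (A : 'M[C]_(m, n)) : adj (tenspow M A) = tenspow M (adj A).
Proof. by elim: M => [|M IH] /=; rewrite ?adj1 // adj_tens IH. Qed.

Lemma mxtrace_tenspow M n (A : 'M[C]_n) : \tr (tenspow M A) = \tr A ^+ M.
Proof. by elim: M => [|M IH] /=; rewrite ?mxtrace1 // mxtrace_tens IH exprS. Qed.

Lemma mxtrace1_dim_gt0 n (A : 'M[C]_n) : \tr A = 1 -> (0 < n)%N.
Proof.
by case: n A => // A; rewrite /mxtrace big_ord0 => /eqP; rewrite eq_sym oner_eq0.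
Qed.

Definition qform n (a : 'cV[C]_n) (X : 'M[C]_n) : C := (adj a *m X *m a) 0 0.

Lemma qform_linear n (a : 'cV[C]_n) b X Y :
  qform a (b *: X + Y) = b * qform a X + qform a Y.
Proof. by rewrite /qform mulmxDr mulmxDl -scalemxAr -scalemxAl !mxE. Qed.

Lemma qform_phase n (a : 'cV[C]_n) c X : `|c| = 1 -> qform (c *: a) X = qform a X.
Proof.
move=> c1; rewrite /qform adjZ -!scalemxAl -scalemxAr !mxE mulrA.
by rewrite -normCKC c1 expr1n mul1r.
Qed.

Lemma qform_conj m n (A : 'M[C]_(m, n)) a X :
  qform a (A *m X *m adj A) = qform (adj A *m a) X.
Proof. by rewrite /qform adjM adjK !mulmxA. Qed.

Lemma qform_proj n (a b : 'cV[C]_n) : qform a (proj b) = `|(adj b *m a) 0 0| ^+ 2.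
Proof.
rewrite /qform /proj mulmxA -(mulmxA (adj a *m b)) mxE big_ord1 normCKC.
by rewrite -[adj a *m b]adjK adjM adjK adjE.
Qed.

Lemma mxtrace_proj_mul n (a : 'cV[C]_n) X : \tr (proj a *m X) = qform a X.
Proof. by rewrite /proj -mulmxA mxtrace_mulC trace_mx11. Qed.

Lemma mxtrace_mul_adj m n (B : 'M[C]_(m, n)) X :
  \tr (B *m adj B *m X) = \sum_(r < n) qform (col r B) X.
Proof.
rewrite -mulmxA mxtrace_mulC /mxtrace /qform; apply: eq_bigr => r _.
have -> : adj (col r B) = row r (adj B) by apply/matrixP=> i j; rewrite !mxE.
by rewrite -row_mul !mxE; apply: eq_bigr => j _; rewrite !mxE.
Qed.

Lemma adj_mul_self_eq0 n (w : 'cV[C]_n) : adj w *m w = 0 -> w = 0.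
Proof.
move=> /matrixP/(_ 0 0); rewrite !mxE.
under eq_bigr do rewrite adjE -normCKC.
move=> /psumr_eq0P w0; apply/matrixP=> i j; rewrite [j]ord1 mxE.
by apply/eqP; rewrite -normr_eq0 -sqrf_eq0 w0 // => k _; apply: exprn_ge0.
Qed.

Lemma unit_vec_dot1 n (a b : 'cV[C]_n) :
  unit_vec a -> unit_vec b -> adj a *m b = 1 -> b = a.
Proof.
move=> ua ub ab; have ba : adj b *m a = 1 by rewrite -[a]adjK -adjM ab adj1.
apply/eqP; rewrite -subr_eq0; apply/eqP/adj_mul_self_eq0.
by rewrite adjB mulmxBl !mulmxBr ua ub ab ba !subrr.
Qed.

Lemma unit_vec_unitary n (A : 'M[C]_n) a : unitary A -> unit_vec a -> unit_vec (A *m a).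
Proof. by move=> [AA _] ua; rewrite /unit_vec adjM -mulmxA (mulmxA (adj A)) AA mul1mx. Qed.

Lemma proj_idem n (a : 'cV[C]_n) : unit_vec a -> proj a *m proj a = proj a.
Proof. by move=> ua; rewrite /proj mulmxA -(mulmxA a) ua mulmx1. Qed.

Lemma proj_mul m n (A : 'M[C]_(m, n)) a : proj (A *m a) = A *m proj a *m adj A.
Proof. by rewrite /proj adjM !mulmxA. Qed.

Lemma conj_phase m n c (A : 'M[C]_(m, n)) X :
  `|c| = 1 -> (c *: A) *m X *m adj (c *: A) = A *m X *m adj A.
Proof.
move=> c1; rewrite adjZ -!scalemxAl -scalemxAr scalerA -normCK c1 expr1n.
by rewrite scale1r.
Qed.

Lemma mxtrace_proj n (a : 'cV[C]_n) : unit_vec a -> \tr (proj a) = 1.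
Proof. by move=> ua; rewrite mxtrace_mulC ua mxtrace1. Qed.

Lemma eq_completely_positive m n (L L' : 'M[C]_m -> 'M[C]_n) :
  L =1 L' -> completely_positive L' -> completely_positive L.
Proof.
move=> LL' cpL' k B psdB v; have := cpL' k B psdB v.
by under eq_bigr do under eq_bigr do rewrite -LL'.
Qed.

Lemma completely_positiveD m n (L1 L2 : 'M[C]_m -> 'M[C]_n) :
  completely_positive L1 -> completely_positive L2 ->
  completely_positive (fun X => L1 X + L2 X).
Proof.
move=> cp1 cp2 k B psdB v.
under eq_bigr do under eq_bigr do rewrite mulmxDr mulmxDl mxE.
under eq_bigr do rewrite big_split /=.
by rewrite big_split addr_ge0 //; [apply: cp1 | apply: cp2].
Qed.

Lemma completely_positiveZ m n c (L : 'M[C]_m -> 'M[C]_n) :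
  0 <= c -> completely_positive L -> completely_positive (fun X => c *: L X).
Proof.
move=> c_ge0 cpL k B psdB v.
under eq_bigr do under eq_bigr do rewrite -scalemxAr -scalemxAl mxE.
under eq_bigr do rewrite -mulr_sumr.
by rewrite -mulr_sumr mulr_ge0 //; apply: cpL.
Qed.

Lemma completely_positive_sum (I : finType) (P : pred I) m n
    (L : I -> 'M[C]_m -> 'M[C]_n) :
  (forall i, completely_positive (L i)) ->
  completely_positive (fun X => \sum_(i | P i) L i X).
Proof.
move=> cpL k B psdB v.
under eq_bigr do under eq_bigr do rewrite mulmx_sumr mulmx_suml summxE.
under eq_bigr do rewrite exchange_big /=.
by rewrite exchange_big sumr_ge0 // => i _; apply: cpL.
Qed.

(* Testing the output blocks against [v] amounts to testing the input blocks
   against [w_l i = (adj A *m v i) l 0 *: a], one family for each column [l] of [A]. *)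
Lemma completely_positive_qform m n p (a : 'cV[C]_m) (A : 'M[C]_(n, p)) :
  completely_positive (fun X => qform a X *: (A *m adj A)).
Proof.
move=> k B psdB v.
have pullback i j : (adj (v i) *m (qform a (B i j) *: (A *m adj A)) *m v j) 0 0 =
    \sum_(l < p) (adj ((adj A *m v i) l 0 *: a) *m B i j
                  *m ((adj A *m v j) l 0 *: a)) 0 0.
  rewrite -scalemxAr -scalemxAl mxE !mulmxA -(mulmxA _ _ (v j)) mxE mulr_sumr.
  apply: eq_bigr => l _; rewrite adjZ -!scalemxAl -scalemxAr scalerA [in RHS]mxE.
  by rewrite -[adj (v i) *m A]adjK adjM adjK adjE mulrC.
under eq_bigr do under eq_bigr do rewrite pullback.
under eq_bigr do rewrite exchange_big /=.
by rewrite exchange_big sumr_ge0 // => l _; apply: psdB.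
Qed.

Lemma completely_positive_trace m n p q (B : 'M[C]_(m, n)) (A : 'M[C]_(p, q)) :
  completely_positive (fun X => \tr (B *m adj B *m X) *: (A *m adj A)).
Proof.
apply: (@eq_completely_positive _ _ _
  (fun X => \sum_(r < n) qform (col r B) X *: (A *m adj A))).
  by move=> X; rewrite mxtrace_mul_adj scaler_suml.
by apply: completely_positive_sum => r; apply: completely_positive_qform.
Qed.

End MatrixFacts.

Lemma reindex_mulgl (gT : finGroupType) (G : {group gT}) (V : nmodType)
    (F : gT -> V) k :
  k \in G -> \sum_(g in G) F g = \sum_(g in G) F (k * g)%g.
Proof.
by move=> Gk; rewrite (reindex_inj (mulgI k)); apply: eq_bigl => g; rewrite groupMl.
Qed.

Section ProjectiveRepresentation.
Variables (C : numClosedFieldType) (gT : finGroupType) (G : {group gT}) (n : nat).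
Variable U : gT -> 'M[C]_n.
Hypothesis repU : proj_unitary_rep G U.

Lemma rep_unitary g : g \in G -> unitary (U g).
Proof. by case: repU => unitaryU _; apply: unitaryU. Qed.

Lemma rep_adj_mul k g : k \in G -> g \in G ->
  exists c : C, `|c| = 1 /\ adj (U k) *m U g = c *: U (k^-1 * g)%g.
Proof.
move=> Gk Gg; case: repU => _ mulU.
have [c [c1 UkU]] := mulU k (k^-1 * g)%g Gk (groupM (groupVr Gk) Gg).
rewrite mulKVg in UkU.
have c_neq0 : c != 0 by rewrite -normr_eq0 c1 oner_eq0.
exists c^-1; split; first by rewrite normfV c1 invr1.
have -> : U g = c^-1 *: (U k *m U (k^-1 * g)%g) by rewrite UkU scalerA mulVf ?scale1r.
by rewrite -scalemxAr mulmxA (rep_unitary Gk).1 mul1mx.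
Qed.

Lemma rep_conj k g X : k \in G -> g \in G ->
  U k *m (U g *m X *m adj (U g)) *m adj (U k) =
  U (k * g)%g *m X *m adj (U (k * g)%g).
Proof.
move=> Gk Gg; case: repU => _ mulU; have [c [c1 UkU]] := mulU k g Gk Gg.
by rewrite !mulmxA -(mulmxA _ (adj (U g))) -adjM UkU conj_phase.
Qed.

Lemma rep_qform k g a X : k \in G -> g \in G ->
  qform (U g *m a) (U k *m X *m adj (U k)) = qform (U (k^-1 * g)%g *m a) X.
Proof.
move=> Gk Gg; have [c [c1 UkU]] := rep_adj_mul Gk Gg.
by rewrite qform_conj mulmxA UkU -scalemxAl qform_phase.
Qed.

Lemma rep_mxtrace k X : k \in G -> \tr (U k *m X *m adj (U k)) = \tr X.
Proof. by move=> Gk; rewrite mxtrace_mulC mulmxA (rep_unitary Gk).1 mul1mx. Qed.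

Lemma rep_tenspow M : proj_unitary_rep G (fun g => tenspow M (U g)).
Proof.
case: repU => unitaryU mulU; split.
  move=> g Gg; rewrite /unitary adj_tenspow -!tenspowM.
  by rewrite (unitaryU g Gg).1 (unitaryU g Gg).2 !tenspow1.
move=> g g' Gg Gg'; have [c [c1 UgU]] := mulU g g' Gg Gg'.
exists (c ^+ M); split; first by rewrite normrX c1 expr1n.
by rewrite -tenspowM UgU tenspowZ.
Qed.

End ProjectiveRepresentation.

Section CovariantChannel.
Variables (C : numClosedFieldType) (gT : finGroupType) (G H : {group gT}).
Variables (d d' M : nat) (U : gT -> 'M[C]_d) (U' : gT -> 'M[C]_d').
Variables (xi : 'cV[C]_d) (phi : 'cV[C]_d').
Hypotheses (sHG : H \subset G) (repU : proj_unitary_rep G U) (unit_xi : unit_vec xi).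
Hypothesis chi_xi : forall g, g \in G -> chi U xi g = if g \in H then 1 else 0.
Hypotheses (repU' : proj_unitary_rep G U') (unit_phi : unit_vec phi).
Hypothesis symH : H \subset SymG G U' phi.

Let GH h : h \in H -> h \in G := subsetP sHG h.

Definition orbit g := U g *m xi.

Definition coset_proj := #|H|%:R^-1 *: \sum_(g in G) proj (orbit g).

Let V g := tenspow M (U' g).
Let Phi := tenspow M (proj phi).
Let D := pdim d' M.

Definition target g := V g *m Phi *m adj (V g).

Definition channel (X : 'M[C]_d) : 'M[C]_D :=
  \sum_(g in G) (#|H|%:R^-1 * qform (orbit g) X) *: target g
  + (\tr ((1%:M - coset_proj) *m X) / D%:R) *: 1%:M.

Lemma orbit_unit g : g \in G -> unit_vec (orbit g).
Proof. by move=> Gg; apply: unit_vec_unitary (rep_unitary repU Gg) unit_xi. Qed.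

Lemma stabilizer_fixes_xi h : h \in H -> U h *m xi = xi.
Proof.
move=> Hh; apply: unit_vec_dot1 (orbit_unit (GH Hh)) _ => //.
by rewrite [LHS]mx11_scalar mulmxA -/(chi U xi h) chi_xi ?GH ?Hh.
Qed.

Lemma proj_orbit_coset g h : g \in G -> h \in H -> proj (orbit (g * h)%g) = proj (orbit g).
Proof.
move=> Gg Hh; rewrite /orbit !proj_mul -(rep_conj repU _ Gg (GH Hh)).
by rewrite -proj_mul stabilizer_fixes_xi.
Qed.

Lemma orbit_orth g g' : g \in G -> g' \in G -> (g^-1 * g')%g \notin H ->
  adj (orbit g) *m orbit g' = 0.
Proof.
move=> Gg Gg' notH; have [c [_ UgU]] := rep_adj_mul repU Gg Gg'.
rewrite /orbit adjM -mulmxA (mulmxA (adj (U g))) UgU -scalemxAl -scalemxAr mulmxA.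
have Gg'g : (g^-1 * g')%g \in G by rewrite groupM ?groupV.
by rewrite [_ *m xi]mx11_scalar -/(chi U xi _) chi_xi // (negbTE notH) raddf0 scaler0.
Qed.

Lemma proj_orbit_mul g g' : g \in G -> g' \in G ->
  proj (orbit g) *m proj (orbit g') = ((g^-1 * g')%g \in H)%:R *: proj (orbit g').
Proof.
move=> Gg Gg'; have [Hgg' | notH] := boolP ((g^-1 * g')%g \in H).
  by rewrite scale1r -(mulKVg g g') proj_orbit_coset // (proj_idem (orbit_unit Gg)).
by rewrite scale0r /proj mulmxA -(mulmxA (orbit g)) orbit_orth // mulmx0 mul0mx.
Qed.

Lemma sum_stabilizer (W : nmodType) (F : gT -> W) :
  \sum_(g in G) (if g \in H then F g else 0) = \sum_(g in H) F g.
Proof. by rewrite -big_mkcondr; apply: eq_bigl => g; rewrite andb_idl // => /GH. Qed.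

Lemma card_left_coset_mem g' : g' \in G ->
  \sum_(g in G) ((g^-1 * g')%g \in H)%:R = #|H|%:R :> C.
Proof.
move=> Gg'; rewrite (reindex_mulgl _ Gg') -sumr_const -sum_stabilizer.
by apply: eq_bigr => g _; rewrite invMg -mulgA mulVg mulg1 groupV; case: (g \in H).
Qed.

Let cardH_neq0 : #|H|%:R != 0 :> C.
Proof. by rewrite pnatr_eq0 -lt0n cardG_gt0. Qed.

Lemma coset_proj_idem : coset_proj *m coset_proj = coset_proj.
Proof.
have sum_proj2 : (\sum_(g in G) proj (orbit g)) *m (\sum_(g in G) proj (orbit g)) =
    #|H|%:R *: \sum_(g in G) proj (orbit g).
  rewrite mulmx_suml (eq_bigr (fun g =>
    \sum_(g' in G) ((g^-1 * g')%g \in H)%:R *: proj (orbit g'))) => [|g Gg].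
    rewrite exchange_big scaler_sumr; apply: eq_bigr => g' Gg'.
    by rewrite -scaler_suml card_left_coset_mem.
  by rewrite mulmx_sumr; apply: eq_bigr => g' Gg'; apply: proj_orbit_mul.
rewrite /coset_proj -scalemxAl -scalemxAr sum_proj2 !scalerA -mulrA.
by rewrite mulVf ?mulr1.
Qed.

Lemma adj_coset_proj : adj coset_proj = coset_proj.
Proof.
rewrite /coset_proj adjZ adj_sum fmorphV rmorph_nat.
by congr (_ *: _); apply: eq_bigr => g _; rewrite /proj adjM adjK.
Qed.

Lemma mxtrace_coset_proj_mul X :
  \tr (coset_proj *m X) = #|H|%:R^-1 * \sum_(g in G) qform (orbit g) X.
Proof.
rewrite -scalemxAl mxtraceZ mulmx_suml raddf_sum.
by congr (_ * _); apply: eq_bigr => g _; apply: mxtrace_proj_mul.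
Qed.

Lemma qform_orbit_conj k g X : k \in G -> g \in G ->
  qform (orbit (k * g)%g) (U k *m X *m adj (U k)) = qform (orbit g) X.
Proof. by move=> Gk Gg; rewrite /orbit (rep_qform repU) ?groupM // mulKg. Qed.

Lemma sum_qform_orbit_conj k X : k \in G ->
  \sum_(g in G) qform (orbit g) (U k *m X *m adj (U k)) = \sum_(g in G) qform (orbit g) X.
Proof.
by move=> Gk; rewrite (reindex_mulgl _ Gk); apply: eq_bigr => g Gg; rewrite qform_orbit_conj.
Qed.

Lemma qform_orbit_xi g : g \in G -> qform (orbit g) (proj xi) = if g \in H then 1 else 0.
Proof.
move=> Gg; rewrite qform_proj /orbit mulmxA -/(chi U xi g) chi_xi //.
by case: (g \in H); rewrite ?normr1 ?normr0 ?expr1n ?expr0n.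
Qed.

Lemma target_conj k g : k \in G -> g \in G ->
  V k *m target g *m adj (V k) = target (k * g)%g.
Proof. by move=> Gk Gg; rewrite /target (rep_conj (rep_tenspow repU' M)). Qed.

Lemma target_stabilizer h : h \in H -> target h = Phi.
Proof.
move=> Hh; have := subsetP symH h Hh; rewrite inE => /andP[_ /eqP U'phi].
by rewrite /target /V /Phi adj_tenspow -!tenspowM U'phi.
Qed.

Lemma mxtrace_target g : g \in G -> \tr (target g) = 1.
Proof.
move=> Gg; rewrite /target (rep_mxtrace (rep_tenspow repU' M)) //.
by rewrite mxtrace_tenspow mxtrace_proj ?expr1n.
Qed.

Let D_neq0 : D%:R != 0 :> C.
Proof.
have trPhi : \tr Phi = 1 by rewrite mxtrace_tenspow mxtrace_proj ?expr1n.
by rewrite pnatr_eq0 -lt0n (mxtrace1_dim_gt0 trPhi).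
Qed.

Lemma channel_linear : linear_map channel.
Proof.
move=> a X Y; rewrite /channel.
have -> : \sum_(g in G) (#|H|%:R^-1 * qform (orbit g) (a *: X + Y)) *: target g =
    a *: \sum_(g in G) (#|H|%:R^-1 * qform (orbit g) X) *: target g
    + \sum_(g in G) (#|H|%:R^-1 * qform (orbit g) Y) *: target g.
  rewrite scaler_sumr -big_split; apply: eq_bigr => g _.
  by rewrite qform_linear mulrDr scalerDl scalerA mulrCA.
rewrite mulmxDr -scalemxAr mxtraceD mxtraceZ mulrDl -mulrA scalerDl -scalerA.
by rewrite scalerDr addrACA.
Qed.

Lemma channel_trace_preserving : trace_preserving channel.
Proof.
move=> X; rewrite /channel mxtraceD mxtraceZ mxtrace1 divfK // raddf_sum.
rewrite (eq_bigr (fun g => #|H|%:R^-1 * qform (orbit g) X)) => [|g Gg].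
  by rewrite -mulr_sumr -mxtrace_coset_proj_mul mulmxBl mul1mx raddfB addrC subrK.
by rewrite /= mxtraceZ mxtrace_target ?mulr1.
Qed.

Lemma channel_covariant : covariant G U (fun g => tenspow M (U' g)) channel.
Proof.
move=> k Gk X; rewrite /channel mulmxDr mulmxDl.
have -> :
    V k *m (\sum_(g in G) (#|H|%:R^-1 * qform (orbit g) X) *: target g) *m adj (V k)
    = \sum_(g in G) (#|H|%:R^-1 * qform (orbit g) (U k *m X *m adj (U k))) *: target g.
  rewrite mulmx_sumr mulmx_suml [RHS](reindex_mulgl _ Gk); apply: eq_bigr => g Gg.
  by rewrite -scalemxAr -scalemxAl target_conj // qform_orbit_conj.
have -> : \tr ((1%:M - coset_proj) *m (U k *m X *m adj (U k))) =
    \tr ((1%:M - coset_proj) *m X).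
  rewrite !mulmxBl !mul1mx !raddfB /= !mxtrace_coset_proj_mul.
  by rewrite (rep_mxtrace repU) // sum_qform_orbit_conj.
by rewrite -scalemxAr -scalemxAl mulmx1 (rep_unitary (rep_tenspow repU' M) Gk).2.
Qed.

Lemma channel_xi : channel (proj xi) = Phi.
Proof.
have sum_target : \sum_(g in G) (#|H|%:R^-1 * qform (orbit g) (proj xi)) *: target g = Phi.
  rewrite (eq_bigr (fun g => if g \in H then #|H|%:R^-1 *: Phi else 0)) => [|g Gg].
    by rewrite sum_stabilizer sumr_const -scaler_nat scalerA divff ?scale1r.
  rewrite qform_orbit_xi //; case: ifP => [Hg | _]; last by rewrite mulr0 scale0r.
  by rewrite mulr1 target_stabilizer.
rewrite /channel sum_target mulmxBl mul1mx raddfB /= mxtrace_coset_proj_mul.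
rewrite (eq_bigr _ qform_orbit_xi) sum_stabilizer sumr_const mulVf //.
by rewrite mxtrace_proj // subrr mul0r scale0r addr0.
Qed.

Lemma channel_completely_positive : completely_positive channel.
Proof.
set Q := 1%:M - coset_proj.
have QQ : adj Q *m adj (adj Q) = Q.
  rewrite adjK adjB adj1 adj_coset_proj mulmxBl mul1mx mulmxBr mulmx1.
  by rewrite coset_proj_idem subrr subr0.
have targetE g : target g = V g *m tenspow M phi *m adj (V g *m tenspow M phi).
  by rewrite /target /Phi /proj tenspowM adjM adj_tenspow !mulmxA.
apply: (@eq_completely_positive _ _ _ _ (fun X =>
    \sum_(g in G) #|H|%:R^-1 *: (qform (orbit g) X
                   *: (V g *m tenspow M phi *m adj (V g *m tenspow M phi)))
    + D%:R^-1 *: (\tr (adj Q *m adj (adj Q) *m X) *: (1%:M *m adj (1%:M : 'M[C]_D))))).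
  move=> X; rewrite /channel QQ adj1 mulmx1 -/Q; congr (_ + _).
    by apply: eq_bigr => g _; rewrite scalerA targetE.
  by rewrite scalerA mulrC.
have invr_nat_ge0 (k : nat) : 0 <= k%:R^-1 :> C by rewrite invr_ge0 ler0n.
apply: completely_positiveD.
  apply: completely_positive_sum => g; apply: completely_positiveZ => //.
  exact: completely_positive_qform.
apply: completely_positiveZ => //; exact: completely_positive_trace.
Qed.

End CovariantChannel.

Theorem mainTheorem7 (C : numClosedFieldType) (gT : finGroupType)
    (G H : {group gT}) (d d' : nat)
    (U : gT -> 'M[C]_d) (U' : gT -> 'M[C]_d')
    (xi : 'cV[C]_d) (phi : 'cV[C]_d') :
  H \subset G ->
  proj_unitary_rep G U ->
  unit_vec xi ->
  (forall g, g \in G -> chi U xi g = (if g \in H then 1 else 0)) ->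
  proj_unitary_rep G U' ->
  unit_vec phi ->
  H \subset SymG G U' phi ->
  forall M : nat, (0 < M)%N ->
  exists L : 'M[C]_d -> 'M[C]_(pdim d' M),
    [/\ CPTP L,
        covariant G U (fun g => tenspow M (U' g)) L
      & L (proj xi) = tenspow M (proj phi)].
Proof.
(* The construction does not need [0 < M]. *)
move=> sHG repU unit_xi chi_xi repU' unit_phi symH M _.
exists (channel G H M U U' xi phi); split.
- split; first exact: channel_linear.
    exact: channel_completely_positive.
  exact: channel_trace_preserving.
- exact: channel_covariant.
- exact: channel_xi.
Qed.
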